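(* Let ${\bf Y}$ be a set equipped with functions $d^\pi_Y$ ($Y\in{\bf Y}$) and a constant $\xi>0$ satisfying axioms (1)–(4) below, and let $\mathcal H(X,Z)$ be as defined below. If $(X',Z')\in\mathcal H(X,Z)$ and $Y\in{\bf Y}$ is distinct from $X,Z,X',Z'$, then $$d^\pi_Y(X,Z)-d^\pi_Y(X',Z')<2\xi.$$
   Context: Let ${\bf Y}$ be a set and for each $Y\in{\bf Y}$ let $d^\pi_Y:({\bf Y}\setminus\{Y\})\times({\bf Y}\setminus\{Y\})\to[0,\infty)$ be a function, and let $\xi>0$ be a constant, such that (1) $d^\pi_Y(X,Z)=d^\pi_Y(Z,X)$; (2) $d^\pi_Y(X,Z)+d^\pi_Y(Z,W)\ge d^\pi_Y(X,W)$; (3) for pairwise distinct $X,Y,Z$, $\min\{d^\pi_Y(X,Z),d^\pi_Z(X,Y)\}<\xi$; (4) for all $X,Z\in{\bf Y}$ the set $\{Y: d^\pi_Y(X,Z)\ge\xi\}$ is finite. For $X,Z\in{\bf Y}$, $\mathcal H(X,Z)$ is the set of pairs $(X',Z')\in{\bf Y}\times{\bf Y}$ such that one of the following holds: $d^\pi_X(X',Z')>2\xi$ and $d^\pi_Z(X',Z')>2\xi$; or $X'=X$ and $d^\pi_Z(X,Z')>2\xi$; or $Z'=Z$ and $d^\pi_X(X',Z)>2\xi$; or $(X',Z')=(X,Z)$. *)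

From Stdlib Require Import Reals List.
Open Scope R_scope.

(* The function
   d^pi_Y : (T\{Y}) x (T\{Y}) -> [0,oo) is encoded as a total function
   [d Y : T -> T -> R]; its values at arguments equal to Y are junk and
   never constrained or used. *)

Definition finite_pred {T : Type} (P : T -> Prop) : Prop :=
  exists l : list T, forall y, P y -> In y l.

Definition proj_axioms {T : Type} (d : T -> T -> T -> R) (xi : R) : Prop :=
  0 < xi /\
  (forall Y X Z, X <> Y -> Z <> Y -> 0 <= d Y X Z) /\
  (forall Y X Z, X <> Y -> Z <> Y -> d Y X Z = d Y Z X) /\
  (forall Y X Z W, X <> Y -> Z <> Y -> W <> Y ->
     d Y X Z + d Y Z W >= d Y X W) /\
  (forall X Y Z, X <> Y -> Y <> Z -> X <> Z ->
     Rmin (d Y X Z) (d Z X Y) < xi) /\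
  (forall X Z, finite_pred (fun Y => X <> Y /\ Z <> Y /\ d Y X Z >= xi)).

(* The set H(X,Z) of pairs (X',Z'); each clause includes the conditions
   needed for the d^pi values appearing in it to be defined. *)
Definition inH {T : Type} (d : T -> T -> T -> R) (xi : R) (X Z X' Z' : T) : Prop :=
  (X' <> X /\ Z' <> X /\ X' <> Z /\ Z' <> Z /\
     d X X' Z' > 2 * xi /\ d Z X' Z' > 2 * xi) \/
  (X' = X /\ X <> Z /\ Z' <> Z /\ d Z X Z' > 2 * xi) \/
  (Z' = Z /\ X' <> X /\ Z <> X /\ d X X' Z > 2 * xi) \/
  (X' = X /\ Z' = Z).

From Stdlib Require Import Reals Lra.
Open Scope R_scope.

(* If [d_A(P,Q) > 2 xi], then by axiom (3) applied to the triples (P,A,Y) and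
   (Q,A,Y), seen from Y the point A lies within [xi] of P or of Q: otherwise
   [d_A(P,Y)] and [d_A(Q,Y)] would both be below [xi], and the triangle
   inequality at A would bound [d_A(P,Q)] by [2 xi].  Every configuration of
   [H(X,Z)] thus puts X and Z within [xi] of X' or Z' as seen from Y, and the
   triangle inequality at Y finishes. *)

Section ProjectionAxioms.

Variables (T : Type) (d : T -> T -> T -> R) (xi : R).
Hypothesis hax : proj_axioms d xi.

Lemma proj_scale_pos : 0 < xi.
Proof. apply hax. Qed.

Lemma proj_nonneg Y X Z : Y <> X -> Y <> Z -> 0 <= d Y X Z.
Proof.
  destruct hax as (_ & hnn & _); auto using not_eq_sym.
Qed.

Lemma proj_sym Y X Z : Y <> X -> Y <> Z -> d Y X Z = d Y Z X.
Proof.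
  destruct hax as (_ & _ & hsym & _); auto using not_eq_sym.
Qed.

Lemma proj_triangle Y X Z W :
  Y <> X -> Y <> Z -> Y <> W -> d Y X W <= d Y X Z + d Y Z W.
Proof.
  destruct hax as (_ & _ & _ & htri & _); intros.
  apply Rge_le, htri; auto using not_eq_sym.
Qed.

Lemma proj_min_lt X Y Z :
  X <> Y -> Y <> Z -> X <> Z -> d Y X Z < xi \/ d Z X Y < xi.
Proof.
  destruct hax as (_ & _ & _ & _ & h3 & _); intros.
  unfold Rmin in h3; specialize (h3 X Y Z).
  destruct (Rle_dec (d Y X Z) (d Z X Y)); auto.
Qed.

Lemma proj_near_of_far A P Q Y :
  Y <> A -> Y <> P -> Y <> Q -> A <> P -> A <> Q -> d A P Q > 2 * xi ->
  d Y A P < xi \/ d Y A Q < xi.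
Proof.
  intros hYA hYP hYQ hAP hAQ hfar.
  assert (htri : d A P Q <= d A P Y + d A Y Q) by (apply proj_triangle; auto).
  rewrite (proj_sym A Y Q) in htri by auto.
  rewrite (proj_sym Y A P), (proj_sym Y A Q) by auto.
  destruct (proj_min_lt P A Y) as [hP | hP]; auto using not_eq_sym.
  destruct (proj_min_lt Q A Y) as [hQ | hQ]; auto using not_eq_sym.
  lra.
Qed.

Lemma proj_lt_of_near_common Y X Z A :
  Y <> X -> Y <> Z -> Y <> A -> d Y X A < xi -> d Y Z A < xi ->
  d Y X Z < 2 * xi.
Proof.
  intros.
  assert (d Y X Z <= d Y X A + d Y A Z) by (apply proj_triangle; auto).
  rewrite (proj_sym Y A Z) in * by auto.
  lra.
Qed.

Lemma proj_lt_of_near_pair Y X Z A B :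
  Y <> X -> Y <> Z -> Y <> A -> Y <> B -> d Y X A < xi -> d Y Z B < xi ->
  d Y X Z < d Y A B + 2 * xi.
Proof.
  intros.
  assert (d Y X Z <= d Y X A + d Y A Z) by (apply proj_triangle; auto).
  assert (d Y A Z <= d Y A B + d Y B Z) by (apply proj_triangle; auto).
  rewrite (proj_sym Y B Z) in * by auto.
  lra.
Qed.

Lemma proj_diff_lt_of_far_both X Z X' Z' Y :
  Y <> X -> Y <> Z -> Y <> X' -> Y <> Z' ->
  X <> X' -> X <> Z' -> Z <> X' -> Z <> Z' ->
  d X X' Z' > 2 * xi -> d Z X' Z' > 2 * xi ->
  d Y X Z - d Y X' Z' < 2 * xi.
Proof.
  intros hYX hYZ hYX' hYZ' ? ? ? ? hX hZ.
  pose proof (proj_nonneg Y X' Z' hYX' hYZ').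
  destruct (proj_near_of_far X X' Z' Y) as [hXn | hXn]; auto;
  destruct (proj_near_of_far Z X' Z' Y) as [hZn | hZn]; auto.
  - assert (d Y X Z < 2 * xi) by (apply (proj_lt_of_near_common Y X Z X'); auto).
    lra.
  - assert (d Y X Z < d Y X' Z' + 2 * xi)
      by (apply (proj_lt_of_near_pair Y X Z X' Z'); auto).
    lra.
  - assert (d Y X Z < d Y Z' X' + 2 * xi)
      by (apply (proj_lt_of_near_pair Y X Z Z' X'); auto).
    rewrite (proj_sym Y Z' X') in * by auto; lra.
  - assert (d Y X Z < 2 * xi) by (apply (proj_lt_of_near_common Y X Z Z'); auto).
    lra.
Qed.

Lemma proj_diff_lt_of_same_left X Z Z' Y :
  Y <> X -> Y <> Z -> Y <> Z' -> Z <> X -> Z <> Z' -> d Z X Z' > 2 * xi ->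
  d Y X Z - d Y X Z' < 2 * xi.
Proof.
  intros hYX hYZ hYZ' ? ? ?.
  pose proof proj_scale_pos.
  pose proof (proj_nonneg Y X Z' hYX hYZ').
  assert (d Y X Z <= d Y X Z' + d Y Z' Z) by (apply proj_triangle; auto).
  rewrite (proj_sym Y Z' Z), (proj_sym Y X Z) in * by auto.
  destruct (proj_near_of_far Z X Z' Y); auto; lra.
Qed.

Lemma proj_diff_lt_of_same_right X Z X' Y :
  Y <> X -> Y <> Z -> Y <> X' -> X <> Z -> X <> X' -> d X X' Z > 2 * xi ->
  d Y X Z - d Y X' Z < 2 * xi.
Proof.
  intros.
  rewrite (proj_sym Y X Z), (proj_sym Y X' Z) by auto.
  rewrite (proj_sym X X' Z) in * by auto.
  apply proj_diff_lt_of_same_left; auto.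
Qed.

End ProjectionAxioms.

Theorem proposition2p2 (T : Type) (d : T -> T -> T -> R) (xi : R)
  (hax : proj_axioms d xi) (X Z X' Z' Y : T)
  (hH : inH d xi X Z X' Z')
  (hYX : Y <> X) (hYZ : Y <> Z) (hYX' : Y <> X') (hYZ' : Y <> Z') :
  d Y X Z - d Y X' Z' < 2 * xi.
Proof.
  destruct hH as [(? & ? & ? & ? & ? & ?) | [(-> & ? & ? & ?) | [(-> & ? & ? & ?) | (-> & ->)]]].
  - apply (proj_diff_lt_of_far_both T d); auto.
  - apply (proj_diff_lt_of_same_left T d); auto.
  - apply (proj_diff_lt_of_same_right T d); auto.
  - pose proof (proj_scale_pos T d xi hax); lra.
Qed.
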